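(* For every integer $n\ge0$, the Zernike polynomials $Z^{n,0},\dots,Z^{n,n}$ satisfy the first-order system $$\frac{\partial Z^{n,n}}{\partial z}=0,\qquad \frac{\partial Z^{n,k}}{\partial \bar z}+\frac{\partial Z^{n,k-1}}{\partial z}=0\ \ (k=1,\dots,n),\qquad \frac{\partial Z^{n,0}}{\partial \bar z}=0,$$ and the boundary conditions $Z^{n,k}(t,\bar t)=(-1)^k t^{\,n-2k}$ for all $|t|=1$ and $k=0,1,\dots,n$.
   Context: Identify $\mathbb R^2$ with $\mathbb C$ via $z=x^1+ix^2$, $\bar z=x^1-ix^2$, and use $\frac{\partial}{\partial z}=\frac12\big(\frac{\partial}{\partial x^1}-i\frac{\partial}{\partial x^2}\big)$, $\frac{\partial}{\partial \bar z}=\frac12\big(\frac{\partial}{\partial x^1}+i\frac{\partial}{\partial x^2}\big)$. Zernike polynomials (in the paper's numbering) are defined for integers $n\ge 0$, $0\le k\le n$ by $$Z^{n,k}(z,\bar z)=\sum_{s=0}^{k}\binom{k}{s}\binom{n-k}{s}z^{n-k-s}(1-z\bar z)^s(-\bar z)^{k-s}\quad\text{for }0\le k\le [n/2],$$ and $Z^{n,k}=(-1)^n\,\overline{Z^{n,n-k}}$ for $[n/2]<k\le n$, where $[\cdot]$ is the integer part. *)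

From Stdlib Require Import Reals Arith.
From Coquelicot Require Import Coquelicot.
Open Scope R_scope.

Definition CC := Complex.C.

Fixpoint cpow (w : CC) (m : nat) : CC :=
  match m with O => RtoC 1 | S m' => Cmult w (cpow w m') end.

Fixpoint csum (f : nat -> CC) (k : nat) : CC :=
  match k with O => f O | S k' => Cplus (csum f k') (f k) end.

Definition binom (n k : nat) : R :=
  if Nat.leb k n then Binomial.C n k else 0.

Definition Zlow (n k : nat) (z : CC) : CC :=
  csum (fun s =>
    Cmult (RtoC (binom k s * binom (n - k) s))
      (Cmult (cpow z (n - k - s))
        (Cmult (cpow (Cminus (RtoC 1) (Cmult z (Cconj z))) s)
               (cpow (Copp (Cconj z)) (k - s))))) k.

Definition Zernike (n k : nat) (z : CC) : CC :=
  if Nat.leb k (Nat.div2 n) then Zlow n k z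
  else Cmult (RtoC ((-1) ^ n)) (Cconj (Zlow n (n - k) z)).

Definition d1 (f : CC -> CC) (x1 x2 : R) : CC :=
  (Derive (fun t => fst (f (t, x2))) x1, Derive (fun t => snd (f (t, x2))) x1).
Definition d2 (f : CC -> CC) (x1 x2 : R) : CC :=
  (Derive (fun t => fst (f (x1, t))) x2, Derive (fun t => snd (f (x1, t))) x2).

Definition dz (f : CC -> CC) (x1 x2 : R) : CC :=
  Cmult (RtoC (/ 2)) (Cminus (d1 f x1 x2) (Cmult Ci (d2 f x1 x2))).
Definition dzbar (f : CC -> CC) (x1 x2 : R) : CC :=
  Cmult (RtoC (/ 2)) (Cplus (d1 f x1 x2) (Cmult Ci (d2 f x1 x2))).

(* t^m for integer exponent m (t <> 0 on the unit circle) *)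
Definition cpowZ (t : CC) (m : Z) : CC :=
  if (0 <=? m)%Z then cpow t (Z.to_nat m) else Cinv (cpow t (Z.to_nat (- m))).

From Pilot Require Import Defs.
From Stdlib Require Import Reals Arith ZArith Lia Lra.
From Coquelicot Require Import Coquelicot.
Open Scope R_scope.

(* A Zernike polynomial is a combination of the monomials
   [z^a (1 - z zbar)^s (-zbar)^b], and since [(1 - z zbar)] has Wirtinger
   derivatives [-zbar] and [-z], differentiating such a combination gives
   another one.  The formula for [Z^{n,k}] with [k <= n/2] remains valid for
   every [k <= n]: conjugation maps the monomial with exponents [(a, s, b)] to
   [(-1)^(a+b)] times the one with [(b, s, a)].  In
   [dZ^{n,k}/dzbar + dZ^{n,k-1}/dz] the coefficient of each monomial then
   vanishes by Pascal's rule and the absorption identities for binomial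
   coefficients.  On [|t| = 1] the factor [1 - t tbar] vanishes, so only the
   [s = 0] term [t^(n-k) (-tbar)^k = (-1)^k t^(n-2k)] survives. *)

Section ComplexValuedDerivative.
Local Open Scope C_scope.

Definition is_cderive (g : R -> C) (x : R) (d : C) : Prop :=
  is_derive (fun t => fst (g t)) x (fst d) /\ is_derive (fun t => snd (g t)) x (snd d).

Lemma is_cderive_ext (g h : R -> C) (x : R) (d d' : C) :
  (forall t, g t = h t) -> d = d' -> is_cderive g x d -> is_cderive h x d'.
Proof.
  intros Egh <- [Hre Him]; split; eapply is_derive_ext; eauto;
    intros t; cbv beta; now rewrite Egh.
Qed.

Lemma is_cderive_const (c : C) (x : R) : is_cderive (fun _ => c) x 0.
Proof. split; exact (@is_derive_const R_AbsRing R_NormedModule _ x). Qed.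

Lemma is_cderive_plus (g h : R -> C) (x : R) (dg dh : C) :
  is_cderive g x dg -> is_cderive h x dh -> is_cderive (fun t => g t + h t) x (dg + dh).
Proof.
  intros [A B] [C D]; split;
    [exact (is_derive_plus _ _ _ _ _ A C) | exact (is_derive_plus _ _ _ _ _ B D)].
Qed.

Lemma is_cderive_mult (g h : R -> C) (x : R) (dg dh : C) :
  is_cderive g x dg -> is_cderive h x dh ->
  is_cderive (fun t => g t * h t) x (dg * h x + g x * dh).
Proof.
  intros [A B] [C D].
  pose proof (is_derive_mult _ _ _ _ _ A C Rmult_comm) as AC.
  pose proof (is_derive_mult _ _ _ _ _ B D Rmult_comm) as BD.
  pose proof (is_derive_mult _ _ _ _ _ A D Rmult_comm) as AD.
  pose proof (is_derive_mult _ _ _ _ _ B C Rmult_comm) as BC.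
  split.
  - replace (fst (dg * h x + g x * dh))
      with (fst dg * fst (h x) + fst (g x) * fst dh - (snd dg * snd (h x) + snd (g x) * snd dh))%R
      by (simpl; ring).
    exact (is_derive_minus _ _ _ _ _ AC BD).
  - replace (snd (dg * h x + g x * dh))
      with (fst dg * snd (h x) + fst (g x) * snd dh + (snd dg * fst (h x) + snd (g x) * fst dh))%R
      by (simpl; ring).
    exact (is_derive_plus _ _ _ _ _ AD BC).
Qed.

(* [f] has partial derivatives [a + b] in [x1] and [i (a - b)] in [x2]; solving
   for the Wirtinger derivatives gives [a = df/dz] and [b = df/dzbar]. *)
Definition has_wirtinger (f a b : C -> C) : Prop :=
  forall x1 x2 : R,
    is_cderive (fun t => f (t, x2)) x1 (a (x1, x2) + b (x1, x2)) /\
    is_cderive (fun t => f (x1, t)) x2 (Ci * (a (x1, x2) - b (x1, x2))).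

Lemma has_wirtinger_ext (f g a a' b b' : C -> C) :
  (forall z, f z = g z) -> (forall z, a z = a' z) -> (forall z, b z = b' z) ->
  has_wirtinger f a b -> has_wirtinger g a' b'.
Proof.
  intros Ef Ea Eb H x1 x2; destruct (H x1 x2) as [H1 H2]; rewrite <- Ea, <- Eb.
  split; (eapply is_cderive_ext; [intros t; apply Ef | reflexivity | assumption]).
Qed.

Lemma has_wirtinger_const (c : C) : has_wirtinger (fun _ => c) (fun _ => 0) (fun _ => 0).
Proof.
  intros x1 x2; split; (eapply is_cderive_ext; [reflexivity | | apply is_cderive_const]); ring.
Qed.

Lemma has_wirtinger_id : has_wirtinger (fun z => z) (fun _ => 1) (fun _ => 0).
Proof. intros x1 x2; split; split; simpl; auto_derive; auto; lra. Qed.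

Lemma has_wirtinger_conj : has_wirtinger Cconj (fun _ => 0) (fun _ => 1).
Proof. intros x1 x2; split; split; simpl; auto_derive; auto; lra. Qed.

Lemma has_wirtinger_plus (f g af bf ag bg : C -> C) :
  has_wirtinger f af bf -> has_wirtinger g ag bg ->
  has_wirtinger (fun z => f z + g z) (fun z => af z + ag z) (fun z => bf z + bg z).
Proof.
  intros Hf Hg x1 x2; destruct (Hf x1 x2) as [F1 F2], (Hg x1 x2) as [G1 G2].
  split; (eapply is_cderive_ext; [reflexivity | | apply is_cderive_plus; eassumption]); ring.
Qed.

Lemma has_wirtinger_mult (f g af bf ag bg : C -> C) :
  has_wirtinger f af bf -> has_wirtinger g ag bg ->
  has_wirtinger (fun z => f z * g z)
    (fun z => af z * g z + f z * ag z) (fun z => bf z * g z + f z * bg z).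
Proof.
  intros Hf Hg x1 x2; destruct (Hf x1 x2) as [F1 F2], (Hg x1 x2) as [G1 G2].
  split; (eapply is_cderive_ext; [reflexivity | | apply is_cderive_mult; eassumption]);
    cbv beta; ring.
Qed.

Lemma has_wirtinger_scal (c : C) (f a b : C -> C) :
  has_wirtinger f a b ->
  has_wirtinger (fun z => c * f z) (fun z => c * a z) (fun z => c * b z).
Proof.
  intros Hf; eapply has_wirtinger_ext;
    [| | | exact (has_wirtinger_mult _ _ _ _ _ _ (has_wirtinger_const c) Hf)];
    intros z; cbv beta; ring.
Qed.

Lemma has_wirtinger_pow (f a b : C -> C) (p : nat) :
  has_wirtinger f a b ->
  has_wirtinger (fun z => f z ^ p)
    (fun z => INR p * f z ^ (p - 1) * a z) (fun z => INR p * f z ^ (p - 1) * b z).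
Proof.
  intros Hf; induction p as [|p IH].
  - eapply has_wirtinger_ext; [| | | apply (has_wirtinger_const 1)]; intros z; simpl; ring.
  - assert (Hpow : forall z, f z * (INR p * f z ^ (p - 1)) = INR p * f z ^ p).
    { intros z; destruct p as [|p]; simpl; [ring | rewrite Nat.sub_0_r; ring]. }
    eapply has_wirtinger_ext; [| | | exact (has_wirtinger_mult _ _ _ _ _ _ Hf IH)];
      intros z; [reflexivity | |]; cbv beta;
      rewrite Cmult_assoc, Hpow, Nat.sub_succ, Nat.sub_0_r, S_INR, RtoC_plus; ring.
Qed.

Lemma has_wirtinger_csum (F A B : nat -> C -> C) (k : nat) :
  (forall s, has_wirtinger (F s) (A s) (B s)) ->
  has_wirtinger (fun z => csum (fun s => F s z) k)
    (fun z => csum (fun s => A s z) k) (fun z => csum (fun s => B s z) k).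
Proof.
  intros H; induction k as [|k IH];
    [apply H | exact (has_wirtinger_plus _ _ _ _ _ _ IH (H (S k)))].
Qed.

Lemma d1_d2_of_has_wirtinger (f a b : C -> C) (x1 x2 : R) :
  has_wirtinger f a b ->
  Defs.d1 f x1 x2 = a (x1, x2) + b (x1, x2) /\
  Defs.d2 f x1 x2 = Ci * (a (x1, x2) - b (x1, x2)).
Proof.
  intros H; destruct (H x1 x2) as [[Re1 Im1] [Re2 Im2]]; unfold Defs.d1, Defs.d2.
  split; apply injective_projections; simpl; apply is_derive_unique; assumption.
Qed.

Lemma dz_of_has_wirtinger (f a b : C -> C) (x1 x2 : R) :
  has_wirtinger f a b -> dz f x1 x2 = a (x1, x2).
Proof.
  intros H; destruct (d1_d2_of_has_wirtinger f a b x1 x2 H) as [D1 D2].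
  unfold dz; rewrite D1, D2.
  destruct (a (x1, x2)), (b (x1, x2)); apply injective_projections; simpl; field.
Qed.

Lemma dzbar_of_has_wirtinger (f a b : C -> C) (x1 x2 : R) :
  has_wirtinger f a b -> dzbar f x1 x2 = b (x1, x2).
Proof.
  intros H; destruct (d1_d2_of_has_wirtinger f a b x1 x2 H) as [D1 D2].
  unfold dzbar; rewrite D1, D2.
  destruct (a (x1, x2)), (b (x1, x2)); apply injective_projections; simpl; field.
Qed.

End ComplexValuedDerivative.

Section FiniteSums.
Local Open Scope C_scope.

(* Equations between sums are stated at type [C] rather than at the alias [CC]
   returned by [csum], since [ring] only recognises the former. *)

Lemma csum_ext (f g : nat -> C) (k : nat) :
  (forall s, (s <= k)%nat -> f s = g s) -> csum f k = csum g k.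
Proof.
  induction k as [|k IH]; intros E; simpl; [apply E; lia|].
  rewrite IH by (intros; apply E; lia); rewrite E by lia; reflexivity.
Qed.

Lemma csum_eq0 (f : nat -> C) (k : nat) :
  (forall s, (s <= k)%nat -> f s = 0) -> csum f k = 0 :> C.
Proof.
  induction k as [|k IH]; intros E; simpl; [apply E; lia|].
  rewrite IH by (intros; apply E; lia); rewrite E by lia; ring.
Qed.

Lemma csum_plus (f g : nat -> C) (k : nat) :
  csum (fun s => f s + g s) k = csum f k + csum g k :> C.
Proof. induction k as [|k IH]; simpl; [reflexivity | rewrite IH; ring]. Qed.

Lemma csum_scal (c : C) (f : nat -> C) (k : nat) :
  c * csum f k = csum (fun s => c * f s) k.
Proof. induction k as [|k IH]; simpl; [reflexivity | rewrite <- IH; ring]. Qed.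

Lemma csum_conj (f : nat -> C) (k : nat) :
  Cconj (csum f k) = csum (fun s => Cconj (f s)) k.
Proof. induction k as [|k IH]; simpl; [reflexivity | now rewrite Cplus_conj, IH]. Qed.

Lemma csum_recl (f : nat -> C) (k : nat) :
  csum f (S k) = f O + csum (fun s => f (S s)) k :> C.
Proof.
  induction k as [|k IH]; [reflexivity|].
  change (csum f (S (S k))) with (csum f (S k) + f (S (S k))); rewrite IH; simpl; ring.
Qed.

Lemma csum_widen (f : nat -> C) (k n : nat) :
  (k <= n)%nat -> (forall s, (k < s <= n)%nat -> f s = 0) -> csum f n = csum f k :> C.
Proof.
  induction n as [|n IH]; intros Hkn E; [now replace k with O by lia|].
  destruct (Nat.eq_dec k (S n)) as [->|Hk]; [reflexivity|].
  simpl; rewrite IH by (lia || intros; apply E; lia); rewrite (E (S n)) by lia; ring.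
Qed.

Lemma csum_eq_first (f : nat -> C) (k : nat) :
  (forall s, (0 < s <= k)%nat -> f s = 0) -> csum f k = f O :> C.
Proof. intros E; rewrite (csum_widen f 0 k) by (lia || auto); reflexivity. Qed.

End FiniteSums.

Lemma binom_gt (n k : nat) : (n < k)%nat -> binom n k = 0.
Proof. intros H; unfold binom; destruct (Nat.leb_spec k n); [lia | reflexivity]. Qed.

Lemma binom_le (n k : nat) : (k <= n)%nat -> binom n k = Binomial.C n k.
Proof. intros H; unfold binom; destruct (Nat.leb_spec k n); [reflexivity | lia]. Qed.

Lemma binom_0_r (n : nat) : binom n 0 = 1.
Proof.
  rewrite binom_le by lia; unfold Binomial.C; rewrite Nat.sub_0_r; simpl.
  field; apply INR_fact_neq_0.
Qed.

Lemma binom_diag (n : nat) : binom n n = 1.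
Proof.
  rewrite binom_le by lia; unfold Binomial.C; rewrite Nat.sub_diag; simpl.
  field; apply INR_fact_neq_0.
Qed.

Lemma binom_pascal (n k : nat) : binom n k + binom n (S k) = binom (S n) (S k).
Proof.
  destruct (Nat.lt_ge_cases k n) as [H|H].
  - rewrite !binom_le by lia; apply pascal, H.
  - rewrite (binom_gt n (S k)) by lia; destruct (Nat.eq_dec k n) as [->|H'].
    + rewrite !binom_diag; ring.
    + rewrite !binom_gt by lia; ring.
Qed.

Lemma binom_absorb (n k : nat) : INR (S k) * binom (S n) (S k) = INR (S n) * binom n k.
Proof.
  destruct (Nat.le_gt_cases k n) as [H|H]; [|rewrite !binom_gt by lia; ring].
  rewrite !binom_le by lia; unfold Binomial.C; replace (S n - S k)%nat with (n - k)%nat by lia.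
  change (fact (S n)) with (S n * fact n)%nat; change (fact (S k)) with (S k * fact k)%nat.
  rewrite !mult_INR; field; repeat split; apply INR_fact_neq_0 || (apply not_0_INR; lia).
Qed.

Lemma binom_absorb_compl (n k : nat) : INR (S n - k) * binom (S n) k = INR (S n) * binom n k.
Proof.
  destruct (Nat.le_gt_cases k n) as [H|H].
  - rewrite !binom_le by lia; unfold Binomial.C; replace (S n - k)%nat with (S (n - k)) by lia.
    change (fact (S n)) with (S n * fact n)%nat.
    change (fact (S (n - k))) with (S (n - k) * fact (n - k))%nat.
    rewrite !mult_INR; field; repeat split; apply INR_fact_neq_0 || (apply not_0_INR; lia).
  - rewrite (binom_gt n k) by lia; destruct (Nat.eq_dec k (S n)) as [->|H'].
    + rewrite Nat.sub_diag; simpl; ring.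
    + rewrite binom_gt by lia; ring.
Qed.

Lemma binom_zernike_identity (m K s : nat) :
  INR (S s) * (binom K (S s) * binom (S m) (S s) - binom (S K) (S s) * binom m (S s))
  + INR (S m - s) * (binom K s * binom (S m) s)
  - INR (S K - s) * (binom (S K) s * binom m s) = 0.
Proof.
  pose proof (binom_absorb m s) as Am; pose proof (binom_absorb K s) as AK.
  pose proof (binom_absorb_compl m s) as Am'; pose proof (binom_absorb_compl K s) as AK'.
  transitivity (binom K (S s) * (INR (S s) * binom (S m) (S s))
                - binom m (S s) * (INR (S s) * binom (S K) (S s))
                + binom K s * (INR (S m - s) * binom (S m) s)
                - binom m s * (INR (S K - s) * binom (S K) s)); [ring|].
  rewrite Am, AK, Am', AK'.
  transitivity (INR (S m) * binom m s * (binom K s + binom K (S s))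
                - INR (S K) * binom K s * (binom m s + binom m (S s))); [ring|].
  rewrite !binom_pascal.
  apply (Rmult_eq_reg_l (INR (S s))); [|apply not_0_INR; lia].
  transitivity (INR (S m) * binom m s * (INR (S s) * binom (S K) (S s))
                - INR (S K) * binom K s * (INR (S s) * binom (S m) (S s))); [ring|].
  rewrite Am, AK; ring.
Qed.

Section ZernikeDerivatives.
Local Open Scope C_scope.

Definition disk_defect (z : C) : C := 1 - z * Cconj z.
Definition opp_conj (z : C) : C := - Cconj z.

Definition zmono (a s b : nat) (z : C) : C := z ^ a * (disk_defect z ^ s * opp_conj z ^ b).
Definition zcoef (n k s : nat) : R := binom k s * binom (n - k) s.

Lemma Zlow_zmono (n k : nat) (z : C) :
  Zlow n k z = csum (fun s => zcoef n k s * zmono (n - k - s) s (k - s) z) k.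
Proof. reflexivity. Qed.

Lemma has_wirtinger_disk_defect : has_wirtinger disk_defect opp_conj (fun z => - z).
Proof.
  pose proof (has_wirtinger_plus _ _ _ _ _ _ (has_wirtinger_const 1) (has_wirtinger_scal (-1) _ _ _
    (has_wirtinger_mult _ _ _ _ _ _ has_wirtinger_id has_wirtinger_conj))) as H.
  eapply has_wirtinger_ext; [| | | exact H]; intros z; unfold disk_defect, opp_conj; ring.
Qed.

Lemma has_wirtinger_opp_conj : has_wirtinger opp_conj (fun _ => 0) (fun _ => - 1).
Proof.
  eapply has_wirtinger_ext; [| | | exact (has_wirtinger_scal (-1) _ _ _ has_wirtinger_conj)];
    intros z; unfold opp_conj; ring.
Qed.

Definition dz_zmono (a s b : nat) (z : C) : C :=
  INR a * zmono (a - 1) s b z + INR s * zmono a (s - 1) (S b) z.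
Definition dzbar_zmono (a s b : nat) (z : C) : C :=
  - (INR s * zmono (S a) (s - 1) b z) - INR b * zmono a s (b - 1) z.

Lemma has_wirtinger_zmono (a s b : nat) :
  has_wirtinger (zmono a s b) (dz_zmono a s b) (dzbar_zmono a s b).
Proof.
  pose proof (has_wirtinger_mult _ _ _ _ _ _ (has_wirtinger_pow _ _ _ a has_wirtinger_id)
    (has_wirtinger_mult _ _ _ _ _ _ (has_wirtinger_pow _ _ _ s has_wirtinger_disk_defect)
      (has_wirtinger_pow _ _ _ b has_wirtinger_opp_conj))) as H.
  eapply has_wirtinger_ext; [| | | exact H]; intros z; [reflexivity | |];
    unfold dz_zmono, dzbar_zmono, zmono; cbv beta; rewrite !Cpow_S; ring.
Qed.

Definition dz_Zlow (n k : nat) (z : C) : C :=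
  csum (fun s => zcoef n k s * dz_zmono (n - k - s) s (k - s) z) k.
Definition dzbar_Zlow (n k : nat) (z : C) : C :=
  csum (fun s => zcoef n k s * dzbar_zmono (n - k - s) s (k - s) z) k.

Lemma has_wirtinger_Zlow (n k : nat) :
  has_wirtinger (Zlow n k) (dz_Zlow n k) (dzbar_Zlow n k).
Proof.
  apply (has_wirtinger_csum (fun s z => zcoef n k s * zmono (n - k - s) s (k - s) z)
                            (fun s z => zcoef n k s * dz_zmono (n - k - s) s (k - s) z)
                            (fun s z => zcoef n k s * dzbar_zmono (n - k - s) s (k - s) z)).
  intros s; apply has_wirtinger_scal, has_wirtinger_zmono.
Qed.

End ZernikeDerivatives.

Section Cancellation.
Local Open Scope C_scope.
Variables (m K : nat) (z : C).

(* With [n = m + K + 1], the coefficients of [Z^{n,K+1}] and of [Z^{n,K}]. *)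
Let c1 (s : nat) : R := binom (S K) s * binom m s.
Let c0 (s : nat) : R := binom K s * binom (S m) s.

(* Differentiation produces two kinds of monomials; [shifted_part (S s)] has the
   same exponents as [diagonal_part s]. *)
Let shifted_part (s : nat) : C :=
  INR s * (c0 s - c1 s) * zmono (S m - s) (s - 1) (S K - s) z.
Let diagonal_part (s : nat) : C :=
  (INR (S m - s) * c0 s - INR (S K - s) * c1 s) * zmono (m - s) s (K - s) z.

Lemma dzbar_dz_summand_split (s : nat) : (s <= S K)%nat ->
  c1 s * dzbar_zmono (m - s) s (S K - s) z + c0 s * dz_zmono (S m - s) s (K - s) z
  = shifted_part s + diagonal_part s.
Proof.
  intros Hs; unfold dzbar_zmono, dz_zmono, shifted_part, diagonal_part.
  replace (S K - s - 1)%nat with (K - s)%nat by lia.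
  replace (S m - s - 1)%nat with (m - s)%nat by lia.
  (* Where truncated subtraction makes [S m - s] or [S K - s] differ from
     [S (m - s)] or [S (K - s)], the binomial coefficient in front vanishes. *)
  destruct (Nat.le_gt_cases s m) as [Hm|Hm];
    [replace (S m - s)%nat with (S (m - s)) by lia | unfold c1; rewrite (binom_gt m s Hm)];
  (destruct (Nat.le_gt_cases s K) as [HK|HK];
    [replace (S K - s)%nat with (S (K - s)) by lia | unfold c0; rewrite (binom_gt K s HK)]);
  rewrite ?Rmult_0_r, ?Rmult_0_l; ring.
Qed.

Lemma dzbar_dz_cancel :
  csum (fun s => c1 s * dzbar_zmono (m - s) s (S K - s) z) (S K)
  + csum (fun s => c0 s * dz_zmono (S m - s) s (K - s) z) K = 0.
Proof.
  rewrite <- (csum_widen (fun s => c0 s * dz_zmono (S m - s) s (K - s) z) K (S K)); [| lia |].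
  2:{ intros s Hs; replace s with (S K) by lia; unfold c0.
       rewrite binom_gt, Rmult_0_l by lia; ring. }
  rewrite <- csum_plus, (csum_ext _ (fun s => shifted_part s + diagonal_part s))
    by (intros; apply dzbar_dz_summand_split; assumption).
  assert (E0 : shifted_part 0 = 0) by (unfold shifted_part; change (INR 0) with 0%R; ring).
  assert (E1 : diagonal_part (S K) = 0).
  { unfold diagonal_part, c0; rewrite Nat.sub_diag, binom_gt, Rmult_0_l by lia.
    change (INR 0) with 0%R; ring. }
  rewrite csum_plus, csum_recl; cbn [csum]; rewrite E0, E1.
  transitivity (csum (fun s => shifted_part (S s) + diagonal_part s) K);
    [rewrite csum_plus; ring|].
  apply csum_eq0; intros s _.
  transitivity (RtoC (INR (S s) * (c0 (S s) - c1 (S s))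
                      + INR (S m - s) * c0 s - INR (S K - s) * c1 s)
                * zmono (m - s) s (K - s) z).
  - unfold shifted_part, diagonal_part; simpl Nat.sub; rewrite Nat.sub_0_r.
    rewrite RtoC_minus, RtoC_plus, !RtoC_mult, !RtoC_minus; ring.
  - unfold c0, c1; rewrite binom_zernike_identity; ring.
Qed.

End Cancellation.

Section ZernikeSymmetry.
Local Open Scope C_scope.

Lemma Cconj_RtoC (r : R) : Cconj r = r.
Proof. apply injective_projections; simpl; ring. Qed.

Lemma Cpow_opp (w : C) (p : nat) : (- w) ^ p = RtoC ((-1) ^ p) * w ^ p.
Proof. induction p as [|p IH]; simpl; [ring | rewrite IH, RtoC_mult; ring]. Qed.

Lemma zmono_conj (a s b : nat) (z : C) :
  Cconj (zmono a s b z) = RtoC ((-1) ^ (a + b)) * zmono b s a z.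
Proof.
  assert (Ed : Cconj (disk_defect z) = disk_defect z).
  { unfold disk_defect; rewrite Cminus_conj, Cmult_conj, Cconj_conj, Cconj_RtoC; ring. }
  assert (Eo : Cconj (opp_conj z) = - z)
    by (unfold opp_conj; rewrite Copp_conj, Cconj_conj; reflexivity).
  assert (Ez : Cconj z = - opp_conj z) by (unfold opp_conj; ring).
  unfold zmono; rewrite !Cmult_conj, !Cpow_conj, Ed, Eo, Ez, !Cpow_opp, pow_add, RtoC_mult; ring.
Qed.

Lemma Zlow_conj (n k : nat) (z : C) : (k <= n)%nat ->
  Cconj (Zlow n k z) = RtoC ((-1) ^ n) * Zlow n (n - k) z.
Proof.
  intros Hk; rewrite !Zlow_zmono, csum_conj, csum_scal.
  replace (n - (n - k))%nat with k by lia.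
  assert (Ec : forall s, zcoef n (n - k) s = zcoef n k s).
  { intros s; unfold zcoef; replace (n - (n - k))%nat with k by lia; ring. }
  rewrite <- (csum_widen _ k n), <- (csum_widen _ (n - k) n); [| lia | | lia |].
  2, 3: intros s Hs; rewrite ?Ec; unfold zcoef;
        rewrite ?(binom_gt k s), ?(binom_gt (n - k) s) by lia;
        rewrite ?Rmult_0_l, ?Rmult_0_r, ?Cmult_conj, ?Cconj_RtoC; ring.
  apply csum_ext; intros s _; rewrite Cmult_conj, Cconj_RtoC, zmono_conj, Ec.
  destruct (Req_dec (zcoef n k s) 0) as [Z0|Znz]; [rewrite Z0; ring|].
  assert (Hs : (s <= k)%nat /\ (s <= n - k)%nat).
  { unfold zcoef in Znz; split; apply Nat.nlt_ge; intros Hlt; apply Znz;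
      [rewrite (binom_gt k s Hlt) | rewrite (binom_gt (n - k) s Hlt)]; ring. }
  assert (Esign : ((-1) ^ n = (-1) ^ (n - k - s + (k - s)))%R).
  { replace n with (n - k - s + (k - s) + 2 * s)%nat at 1 by lia.
    rewrite pow_add, pow_1_even; ring. }
  rewrite Esign; ring.
Qed.

Lemma Zernike_Zlow (n k : nat) (z : C) : (k <= n)%nat -> Zernike n k z = Zlow n k z :> C.
Proof.
  intros Hk; unfold Zernike; destruct (Nat.leb k (Nat.div2 n)); [reflexivity|].
  rewrite Zlow_conj by lia; replace (n - (n - k))%nat with k by lia.
  rewrite Cmult_assoc, <- RtoC_mult, <- pow_add; replace (n + n)%nat with (2 * n)%nat by lia.
  rewrite pow_1_even; ring.
Qed.

End ZernikeSymmetry.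

Section BoundaryValues.
Local Open Scope C_scope.

Lemma Cinv_unique_l (x y : C) : x * y = 1 -> x = / y.
Proof.
  intros H; assert (Hy : y <> 0).
  { intros ->; apply C1_nz; rewrite <- H; ring. }
  transitivity (x * y * / y); [field; exact Hy | rewrite H; ring].
Qed.

Lemma Cpow_mul_conj_unit (t : C) (p q : nat) : Cmod t = 1 ->
  t ^ p * Cconj t ^ q = cpowZ t (Z.of_nat p - Z.of_nat q).
Proof.
  intros Ht.
  assert (T1 : forall r, t ^ r * Cconj t ^ r = 1).
  { intros r; rewrite <- Cpow_mult_l, <- Cmod2_conj, Ht, pow1; apply Cpow_1_l. }
  unfold cpowZ; change cpow with Cpow.
  destruct (Z.leb_spec 0 (Z.of_nat p - Z.of_nat q)) as [H|H].
  - replace (Z.to_nat _) with (p - q)%nat by lia.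
    replace p with (p - q + q)%nat at 1 by lia.
    rewrite Cpow_add_r, <- Cmult_assoc, T1; ring.
  - replace (Z.to_nat _) with (q - p)%nat by lia.
    apply Cinv_unique_l.
    transitivity (t ^ (p + (q - p)) * Cconj t ^ q); [rewrite Cpow_add_r; ring|].
    replace (p + (q - p))%nat with q by lia; apply T1.
Qed.

Lemma disk_defect_unit (t : C) : Cmod t = 1 -> disk_defect t = 0.
Proof. intros Ht; unfold disk_defect; rewrite <- Cmod2_conj, Ht, pow1; ring. Qed.

Lemma Zlow_unit_circle (n k : nat) (t : C) : Cmod t = 1 ->
  Zlow n k t = t ^ (n - k) * opp_conj t ^ k :> C.
Proof.
  intros Ht; rewrite Zlow_zmono, csum_eq_first.
  - unfold zcoef, zmono; rewrite !binom_0_r, Rmult_1_l, !Nat.sub_0_r; simpl; ring.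
  - intros [|s] Hs; [lia|]; unfold zmono; rewrite disk_defect_unit by exact Ht; simpl; ring.
Qed.

Lemma Zernike_unit_circle (n k : nat) (t : C) : (k <= n)%nat -> Cmod t = 1 ->
  Zernike n k t = RtoC ((-1) ^ k) * cpowZ t (Z.of_nat n - 2 * Z.of_nat k) :> C.
Proof.
  intros Hk Ht; rewrite Zernike_Zlow, Zlow_unit_circle by assumption; unfold opp_conj.
  rewrite Cpow_opp; transitivity (RtoC ((-1) ^ k) * (t ^ (n - k) * Cconj t ^ k)); [ring|].
  rewrite Cpow_mul_conj_unit by exact Ht; f_equal; f_equal; lia.
Qed.

End BoundaryValues.

Section ZernikeSystem.
Local Open Scope C_scope.

Lemma has_wirtinger_Zernike (n k : nat) : (k <= n)%nat ->
  has_wirtinger (Zernike n k) (dz_Zlow n k) (dzbar_Zlow n k).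
Proof.
  intros Hk; eapply has_wirtinger_ext; [| | | apply has_wirtinger_Zlow]; intros z;
    [symmetry; apply Zernike_Zlow, Hk | reflexivity | reflexivity].
Qed.

Lemma dz_Zlow_diag (n : nat) (z : C) : dz_Zlow n n z = 0.
Proof.
  apply csum_eq0; intros [|s] Hs; unfold dz_zmono; rewrite Nat.sub_diag.
  - cbn [Nat.sub INR]; ring.
  - unfold zcoef; rewrite Nat.sub_diag, (binom_gt 0 (S s)), Rmult_0_r by lia; ring.
Qed.

Lemma dzbar_Zlow_0 (n : nat) (z : C) : dzbar_Zlow n 0 z = 0.
Proof. unfold dzbar_Zlow, dzbar_zmono; simpl; ring. Qed.

Lemma dzbar_dz_Zlow (n K : nat) (z : C) : (S K <= n)%nat ->
  dzbar_Zlow n (S K) z + dz_Zlow n K z = 0.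
Proof.
  intros Hn; unfold dzbar_Zlow, dz_Zlow, zcoef.
  replace (n - K)%nat with (S (n - S K)) by lia.
  apply dzbar_dz_cancel.
Qed.

End ZernikeSystem.

Theorem theorem1 (n : nat) :
  (forall x1 x2 : R, dz (Zernike n n) x1 x2 = RtoC 0) /\
  (forall k : nat, (1 <= k <= n)%nat -> forall x1 x2 : R,
     Cplus (dzbar (Zernike n k) x1 x2) (dz (Zernike n (k - 1)) x1 x2) = RtoC 0) /\
  (forall x1 x2 : R, dzbar (Zernike n 0) x1 x2 = RtoC 0) /\
  (forall (k : nat) (t : CC), (k <= n)%nat -> Cmod t = 1 ->
     Zernike n k t =
       Cmult (RtoC ((-1) ^ k)) (cpowZ t (Z.of_nat n - 2 * Z.of_nat k)%Z)).
Proof.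
  split; [|split; [|split]].
  - intros x1 x2; rewrite (dz_of_has_wirtinger _ _ _ x1 x2 (has_wirtinger_Zernike n n (le_n n))).
    apply dz_Zlow_diag.
  - intros [|K] [Hk Hkn] x1 x2; [lia|]; rewrite Nat.sub_succ, Nat.sub_0_r.
    rewrite (dzbar_of_has_wirtinger _ _ _ x1 x2 (has_wirtinger_Zernike n (S K) Hkn)),
            (dz_of_has_wirtinger _ _ _ x1 x2 (has_wirtinger_Zernike n K ltac:(lia))).
    apply dzbar_dz_Zlow, Hkn.
  - intros x1 x2.
    rewrite (dzbar_of_has_wirtinger _ _ _ x1 x2 (has_wirtinger_Zernike n 0 (Nat.le_0_l n))).
    apply dzbar_Zlow_0.
  - intros k t; apply Zernike_unit_circle.
Qed.
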